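(* For every positive integer $N$, there are exactly $\varphi(N+1)$ binary words $\mathfrak{s}$ over $\{\mathsf{A},\mathsf{B}\}$ with $\mathsf{P}(\mathfrak{s}) = N$, where $\varphi$ is Euler's totient function.
   Context: $\mathsf{P}(\mathfrak{s})$ denotes the number of distinct words that are subsequences (not necessarily contiguous) of the word $\mathfrak{s}$, the empty word included. *)

From mathcomp Require Import all_boot.
Set Implicit Arguments. Unset Strict Implicit. Unset Printing Implicit Defensive.

(* Binary words over {A,B}: seq bool (A = false, B = true). *)

Fixpoint subseqs_list (s : seq bool) : seq (seq bool) :=
  if s is x :: s' then
    [seq x :: t | t <- subseqs_list s'] ++ subseqs_list s'
  else [:: [::]].

Definition Psub (s : seq bool) : nat := size (undup (subseqs_list s)).

Example Psub_nil : Psub [::] = 1. Proof. by []. Qed.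
Example Psub_AB : Psub [:: false; true] = 4. Proof. by []. Qed.
Example Psub_AA : Psub [:: false; false] = 3. Proof. by []. Qed.
Example Psub_ABA : Psub [:: false; true; false] = 7. Proof. by []. Qed.

From mathcomp Require Import all_boot zify.

(* Let p - 1 and q - 1 count the distinct nonempty subsequences of s starting
   with A and with B, so that P(s) = p + q - 1.  Prepending A to w turns p into
   P(w) + 1 = p + q and leaves q alone, and symmetrically for B: the pair
   (p, q) of s is obtained from (1, 1) by the subtractive Euclidean algorithm
   run backwards.  Hence s |-> (p, q) is a bijection onto the coprime pairs of
   positive integers, and the words with P(s) = N correspond to the p in
   [1, N] coprime to p + q = N + 1. *)

Lemma mem_map_cons (T : eqType) (x y : T) t (U : seq (seq T)) :
  (y :: t \in map (cons x) U) = (y == x) && (t \in U).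
Proof. by apply/mapP/andP => [[t' ? [-> ->]] | [/eqP -> ?]]; [|exists t]. Qed.

Lemma mem_subseqs_list s t : (t \in subseqs_list s) = subseq t s.
Proof.
elim: s t => [|x s IHs] [|y t] //=; rewrite mem_cat IHs ?sub0seq ?orbT //.
rewrite mem_map_cons IHs; case: eqVneq => [->|//].
by apply/orb_idr/cons_subseq.
Qed.

Definition starts_with (b : bool) (t : seq bool) :=
  if t is y :: _ then y == b else false.

Definition Pstart (b : bool) (s : seq bool) :=
  count (starts_with b) (undup (subseqs_list s)).

Lemma size_by_head (U : seq (seq bool)) :
  size U = count (@nilp _) U + count (starts_with false) U + count (starts_with true) U.
Proof. by elim: U => [|[|[] t] U IHU] //=; rewrite IHU ?addnS ?addSn. Qed.

Lemma Psub_Pstart s : Psub s = (Pstart false s + Pstart true s).+1.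
Proof.
rewrite /Psub size_by_head -addnA -add1n; congr (_ + _).
rewrite (@eq_count _ _ (pred1 [::])); last by case.
by rewrite count_uniq_mem ?undup_uniq // mem_undup mem_subseqs_list sub0seq.
Qed.

Lemma Pstart_cons_eq x w : Pstart x (x :: w) = Psub w.
Proof.
rewrite /Pstart /Psub -size_filter -(size_map (cons x) (undup _)).
apply/perm_size/uniq_perm.
- by rewrite filter_uniq ?undup_uniq.
- by rewrite map_inj_uniq ?undup_uniq // => ? ? [].
case=> [|y t]; rewrite mem_filter mem_undup mem_subseqs_list /=.
  by apply/esym/mapP => -[].
by rewrite mem_map_cons mem_undup mem_subseqs_list; case: eqVneq.
Qed.

Lemma Pstart_cons_neq x y w : y != x -> Pstart y (x :: w) = Pstart y w.
Proof.
move=> yx; rewrite /Pstart -!size_filter; apply/perm_size/uniq_perm.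
- by rewrite filter_uniq ?undup_uniq.
- by rewrite filter_uniq ?undup_uniq.
case=> [|z t]; rewrite !mem_filter !mem_undup !mem_subseqs_list //=.
by have [->|] := eqVneq z y; rewrite ?(negPf yx).
Qed.

Fixpoint pair_of_word (s : seq bool) : nat * nat :=
  if s is x :: w then
    let: (p, q) := pair_of_word w in if x then (p, p + q) else (p + q, q)
  else (1, 1).

(* The first argument is fuel; [p + q] steps are always enough. *)
Fixpoint word_of_pair (n p q : nat) : seq bool :=
  if n is n'.+1 then
    if p < q then true :: word_of_pair n' p (q - p)
    else if q < p then false :: word_of_pair n' (p - q) q else [::]
  else [::].

Lemma pair_of_word_Pstart s :
  pair_of_word s = ((Pstart false s).+1, (Pstart true s).+1).
Proof.
by elim: s => [//|[] w /= ->];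
  rewrite Pstart_cons_eq Pstart_cons_neq // Psub_Pstart addSn addnS.
Qed.

Lemma Psub_pair_of_word s :
  Psub s = ((pair_of_word s).1 + (pair_of_word s).2).-1.
Proof. by rewrite pair_of_word_Pstart Psub_Pstart addnS. Qed.

Lemma pair_of_word_spec s (p := (pair_of_word s).1) (q := (pair_of_word s).2) :
  [/\ 0 < p, 0 < q, coprime p q & size s < p + q].
Proof.
rewrite {}/p {}/q; elim: s => [//|x w /=].
case: (pair_of_word w) => p q /= [p_gt0 q_gt0 co_pq size_w].
case: x; split=> //=; try lia.
- by rewrite /coprime gcdnDl.
- by rewrite coprime_sym /coprime gcdnDr gcdnC.
Qed.

Lemma pair_of_wordK n s :
  size s <= n -> word_of_pair n (pair_of_word s).1 (pair_of_word s).2 = s.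
Proof.
elim: s n => [|x w IHw] [|n] //=; rewrite ltnS => /IHw.
have [p_gt0 q_gt0 _ _] := pair_of_word_spec w.
case: (pair_of_word w) p_gt0 q_gt0 => p q /= p_gt0 q_gt0 decode_w.
case: x => /=.
  by rewrite ifT ?addKn ?decode_w //; lia.
by rewrite ifF ?ifT ?addnK ?decode_w //; lia.
Qed.

Lemma coprime_subr p n : p <= n -> coprime p (n - p) = coprime p n.
Proof. by move=> le_pn; rewrite /coprime -(gcdnDl p) subnKC. Qed.

Lemma word_of_pairK n p q : 0 < p -> 0 < q -> coprime p q -> p + q <= n ->
  pair_of_word (word_of_pair n p q) = (p, q).
Proof.
elim: n p q => [|n IHn] p q p_gt0 q_gt0 co_pq; first lia.
rewrite /=; case: ltngtP => [p_lt_q|q_lt_p|p_eq_q] pq_le_n /=.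
- have le_pq := ltnW p_lt_q.
  by rewrite IHn ?subnKC ?subn_gt0 ?coprime_subr //; lia.
- have le_qp := ltnW q_lt_p.
  rewrite IHn ?subnK ?subn_gt0 //; last lia.
  by rewrite coprime_sym coprime_subr // coprime_sym.
- by move: co_pq; rewrite p_eq_q /coprime gcdnn => /eqP ->.
Qed.

Lemma totient_count_iota n : 0 < n -> totient n.+1 = count (coprime^~ n.+1) (iota 1 n).
Proof.
move=> n_gt0; rewrite totient_count_coprime big_ltn // /coprime gcdn0 eqSS.
rewrite eqn0Ngt n_gt0 add0n -sum1_count [RHS]big_mkcond /index_iota subSS subn0.
by apply: eq_bigr => d _; rewrite gcdnC; case: eqP.
Qed.

Definition word_of_split (n p : nat) : seq bool := word_of_pair n p (n - p).

Lemma word_of_splitK n p : 0 < p < n -> coprime p n ->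
  pair_of_word (word_of_split n p) = (p, n - p).
Proof.
move=> /andP[p_gt0 lt_pn] co_pn; have le_pn := ltnW lt_pn.
by rewrite word_of_pairK ?subn_gt0 ?coprime_subr ?subnKC.
Qed.

Lemma Psub_word_of_split n p : 0 < p < n -> coprime p n ->
  Psub (word_of_split n p) = n.-1.
Proof.
move=> p_range co_pn; have /andP[_ /ltnW le_pn] := p_range.
by rewrite Psub_pair_of_word word_of_splitK //= subnKC.
Qed.

Lemma word_of_split_surj s (n := (Psub s).+1) (p := (pair_of_word s).1) :
  [&& 0 < p, p < n & coprime p n] /\ word_of_split n p = s.
Proof.
rewrite {}/n {}/p Psub_pair_of_word /word_of_split.
have [p_gt0 q_gt0 co_pq size_s] := pair_of_word_spec s.
move: (@pair_of_wordK _ _ (ltnW size_s)); case: (pair_of_word s) p_gt0 q_gt0 co_pq size_s.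
move=> p q p_gt0 q_gt0 co_pq _ decode_s.
rewrite prednK ?addn_gt0 ?p_gt0 // addKn decode_s -coprime_subr ?leq_addr //.
by rewrite addKn co_pq andbT -[X in X < _]addn0 ltn_add2l.
Qed.

Theorem proposition1 (N : nat) (hN : 0 < N) :
  exists L : seq (seq bool),
    [/\ uniq L,
        (forall s : seq bool, s \in L <-> Psub s = N)
      & size L = totient N.+1].
Proof.
have mem_splits p : (p \in [seq p <- iota 1 N | coprime p N.+1]) =
    [&& 0 < p, p < N.+1 & coprime p N.+1].
  by rewrite mem_filter mem_iota add1n andbC -andbA.
exists [seq word_of_split N.+1 p | p <- iota 1 N & coprime p N.+1]; split.
- rewrite map_inj_in_uniq ?filter_uniq ?iota_uniq // => p p'.
  rewrite !mem_splits => /and3P[p_gt0 lt_pN co_p] /and3P[p'_gt0 lt_p'N co_p'].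
  move/(congr1 (fst \o pair_of_word)) => /=.
  by rewrite !word_of_splitK ?p_gt0 ?p'_gt0.
- move=> s; split.
    case/mapP => p; rewrite mem_splits => /and3P[p_gt0 lt_pN co_p] ->.
    by rewrite Psub_word_of_split ?p_gt0.
  move=> Ps; have [] := word_of_split_surj s; rewrite Ps => p_range <-.
  by rewrite map_f // mem_splits.
- by rewrite size_map size_filter totient_count_iota.
Qed.
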